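(* Let $\mathcal{A}$ be a Mrówka family on $\omega$, and let $X$ and $f\colon X\to\Psi(\mathcal{A})$ be as defined in the context. If $Z$ is a zero-set in $X$, then $f(Z)$ is a zero-set in $\Psi(\mathcal{A})$.
   Context: For a maximal almost disjoint (MAD) family $\mathcal{A}$ of infinite subsets of $\omega$, $\Psi(\mathcal{A})$ is the space with underlying set $\omega\cup\mathcal{A}$ in which points of $\omega$ are isolated and a basic neighbourhood of $A\in\mathcal{A}$ is $\{A\}\cup\{m\in A: m\ge n\}$ for $n\in\omega$. A Mrówka family is a MAD family $\mathcal{A}$ on $\omega$ such that $\Psi(\mathcal{A})$ is almost compact, i.e. its Čech–Stone compactification equals its one-point compactification. Let $K=\{0,1\}^\omega$ be the Cantor set. The space $X$ has underlying set $(\omega\times K)\cup\mathcal{A}$; a basic neighbourhood of $\langle n,k\rangle$ ($n\in\omega$, $k\in K$) is $\{n\}\times C$ with $C$ an open neighbourhood of $k$ in $K$, and a basic neighbourhood of $A\in\mathcal{A}$ is $U_n(A)=\{A\}\cup\bigcup\{\{m\}\times K: m\in A, m\ge n\}$ for $n\in\omega$. The map $f\colon X\to\Psi(\mathcal{A})$ sends $A\in\mathcal{A}$ to $A$ and every point of $\{n\}\times K$ to $n$. A zero-set in a space $S$ is a set of the form $\xi^{-1}(0)$ for a continuous $\xi\colon S\to[0,1]$. *)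

From Stdlib Require Import Reals List.
Open Scope R_scope.

Definition nset := nat -> Prop.
Definition infinite_set (A : nset) : Prop :=
  forall n, exists m, (n <= m)%nat /\ A m.
Definition almost_disjoint (A B : nset) : Prop :=
  exists n, forall m, (n <= m)%nat -> ~ (A m /\ B m).
Definition infinite_family (F : nset -> Prop) : Prop :=
  forall l : list nset, exists A, F A /\ ~ In A l.
Definition MAD (F : nset -> Prop) : Prop :=
  infinite_family F /\
  (forall A, F A -> infinite_set A) /\
  (forall A B, F A -> F B -> A <> B -> almost_disjoint A B) /\
  (forall B, infinite_set B -> exists A, F A /\ ~ almost_disjoint A B).

Inductive psi_pt : Type := PsiN (n : nat) | PsiA (A : nset).

Definition psi_space (F : nset -> Prop) (p : psi_pt) : Prop :=
  match p with PsiN _ => True | PsiA A => F A end.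

Definition psi_nbhd (p : psi_pt) (n : nat) : psi_pt -> Prop :=
  match p with
  | PsiN m => fun q => q = PsiN m
  | PsiA A => fun q => q = PsiA A \/ exists m, q = PsiN m /\ A m /\ (n <= m)%nat
  end.

Definition psi_open (F : nset -> Prop) (U : psi_pt -> Prop) : Prop :=
  forall p, U p -> psi_space F p /\ exists n, forall q, psi_nbhd p n q -> U q.

Definition psi_compact (F : nset -> Prop) (K : psi_pt -> Prop) : Prop :=
  (forall p, K p -> psi_space F p) /\
  forall (I : Type) (U : I -> psi_pt -> Prop),
    (forall i, psi_open F (U i)) ->
    (forall p, K p -> exists i, U i p) ->
    exists l : list I, forall p, K p -> exists i, In i l /\ U i p.

Definition psi_cont (F : nset -> Prop) (xi : psi_pt -> R) : Prop :=
  forall p, psi_space F p -> forall eps, eps > 0 ->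
    exists n, forall q, psi_nbhd p n q -> Rabs (xi q - xi p) < eps.

Definition psi_unit_valued (F : nset -> Prop) (xi : psi_pt -> R) : Prop :=
  forall p, psi_space F p -> 0 <= xi p <= 1.

(** Almost compactness: beta Psi = alpha Psi, i.e. every continuous
    xi : Psi -> [0,1] extends continuously to the one-point
    compactification (xi converges, at the point at infinity, to some r). *)
Definition psi_almost_compact (F : nset -> Prop) : Prop :=
  forall xi, psi_cont F xi -> psi_unit_valued F xi ->
    exists r, forall eps, eps > 0 ->
      exists K, psi_compact F K /\
        forall p, psi_space F p -> ~ K p -> Rabs (xi p - r) < eps.

Definition mrowka (F : nset -> Prop) : Prop := MAD F /\ psi_almost_compact F.

Definition psi_zero_set (F : nset -> Prop) (Z : psi_pt -> Prop) : Prop :=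
  exists xi, psi_cont F xi /\ psi_unit_valued F xi /\
    forall p, Z p <-> (psi_space F p /\ xi p = 0).

Definition cantor := nat -> bool.

Inductive X_pt : Type := XK (n : nat) (k : cantor) | XA (A : nset).

Definition X_space (F : nset -> Prop) (p : X_pt) : Prop :=
  match p with XK _ _ => True | XA A => F A end.

Definition X_nbhd (p : X_pt) (n : nat) : X_pt -> Prop :=
  match p with
  | XK m k => fun q => exists k', q = XK m k' /\ forall i, (i < n)%nat -> k' i = k i
  | XA A => fun q => q = XA A \/
      exists m k', q = XK m k' /\ A m /\ (n <= m)%nat
  end.

Definition X_cont (F : nset -> Prop) (xi : X_pt -> R) : Prop :=
  forall p, X_space F p -> forall eps, eps > 0 ->
    exists n, forall q, X_nbhd p n q -> Rabs (xi q - xi p) < eps.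

Definition X_unit_valued (F : nset -> Prop) (xi : X_pt -> R) : Prop :=
  forall p, X_space F p -> 0 <= xi p <= 1.

Definition X_zero_set (F : nset -> Prop) (Z : X_pt -> Prop) : Prop :=
  exists xi, X_cont F xi /\ X_unit_valued F xi /\
    forall p, Z p <-> (X_space F p /\ xi p = 0).

Definition fmap (p : X_pt) : psi_pt :=
  match p with XK n _ => PsiN n | XA A => PsiA A end.

Definition image_f (Z : X_pt -> Prop) : psi_pt -> Prop :=
  fun q => exists p, Z p /\ fmap p = q.

From Stdlib Require Import Reals List ClassicalEpsilon.

(* A basic neighbourhood U_n(A) in X contains whole fibres {m} x K of f, so
   for every section s of f the composite xi o s is continuous on Psi(A)
   whenever xi is continuous on X.  Choosing s to pick, in each fibre {n} x K,
   a zero of xi whenever there is one, the zero set of xi o s is exactly f(Z). *)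

Definition fibre_zero (xi : X_pt -> R) (n : nat) : cantor :=
  epsilon (inhabits (fun _ => false)) (fun k => xi (XK n k) = 0).

Lemma fibre_zeroP (xi : X_pt -> R) (n : nat) (k : cantor) :
  xi (XK n k) = 0 -> xi (XK n (fibre_zero xi n)) = 0.
Proof.
  intros Hk. exact (epsilon_spec _ (fun k => xi (XK n k) = 0) (ex_intro _ k Hk)).
Qed.

Definition zero_section (xi : X_pt -> R) (q : psi_pt) : X_pt :=
  match q with
  | PsiN n => XK n (fibre_zero xi n)
  | PsiA A => XA A
  end.

Lemma fmap_zero_section (xi : X_pt -> R) (q : psi_pt) :
  fmap (zero_section xi q) = q.
Proof. now destruct q. Qed.

Lemma X_space_zero_section (F : nset -> Prop) (xi : X_pt -> R) (q : psi_pt) :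
  psi_space F q -> X_space F (zero_section xi q).
Proof. now destruct q. Qed.

Lemma X_nbhd_zero_section (xi : X_pt -> R) (p q : psi_pt) (n : nat) :
  psi_nbhd p n q -> X_nbhd (zero_section xi p) n (zero_section xi q).
Proof.
  destruct p as [m|A]; simpl.
  - intros ->. simpl. eauto.
  - intros [->|[m [-> [HAm Hnm]]]]; simpl; eauto 6.
Qed.

Section SectionComposition.

Variables (F : nset -> Prop) (s : psi_pt -> X_pt).
Hypothesis s_space : forall q, psi_space F q -> X_space F (s q).
Hypothesis s_nbhd : forall p q n, psi_nbhd p n q -> X_nbhd (s p) n (s q).

Lemma psi_cont_comp (xi : X_pt -> R) :
  X_cont F xi -> psi_cont F (fun q => xi (s q)).
Proof.
  intros Hxi p Hp eps Heps.
  destruct (Hxi (s p) (s_space p Hp) eps Heps) as [n Hn].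
  exists n. intros q Hq. exact (Hn (s q) (s_nbhd p q n Hq)).
Qed.

Lemma psi_unit_valued_comp (xi : X_pt -> R) :
  X_unit_valued F xi -> psi_unit_valued F (fun q => xi (s q)).
Proof. intros Hxi q Hq. exact (Hxi (s q) (s_space q Hq)). Qed.

End SectionComposition.

Lemma image_f_zero_section (F : nset -> Prop) (Z : X_pt -> Prop) (xi : X_pt -> R) :
  (forall p, Z p <-> X_space F p /\ xi p = 0) ->
  forall q, image_f Z q <-> psi_space F q /\ xi (zero_section xi q) = 0.
Proof.
  intros HZ q. split.
  - intros [[n k|A] [[Hs H0]%HZ <-]]; simpl.
    + split; [exact I | exact (fibre_zeroP xi n k H0)].
    + now split.
  - intros [Hs H0]. exists (zero_section xi q).
    split; [apply HZ; split; [now apply X_space_zero_section | exact H0]|].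
    apply fmap_zero_section.
Qed.

Theorem lemma3p3 (F : nset -> Prop) (Z : X_pt -> Prop) :
  mrowka F -> X_zero_set F Z -> psi_zero_set F (image_f Z).
Proof.
  intros _ [xi [Hcont [Hunit HZ]]].
  exists (fun q => xi (zero_section xi q)). split; [|split].
  - apply psi_cont_comp; auto using X_space_zero_section, X_nbhd_zero_section.
  - apply psi_unit_valued_comp; auto using X_space_zero_section.
  - exact (image_f_zero_section F Z xi HZ).
Qed.
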